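(* Let $G$ be a group with a BN-pair $(B,N)$ (Weyl group $(W,S)$, $S$ finite) carrying two group topologies $\mathcal{S}\subseteq\mathcal{T}$. Suppose $(G,\mathcal{S})$ satisfies the hypotheses of Theorem 1.1 (namely: $G$ is Hausdorff, its completion is a group, $|P_s:B|<\infty$ for all $s\in S$, and $B$ is open) or of Theorem 1.2. If $\widehat{\mathrm{Id}_B}:\widehat{(B,\mathcal{T}_B)}\to\widehat{(B,\mathcal{S}_B)}$ is surjective, then $\widehat{\mathrm{Id}}:\widehat{(G,\mathcal{T})}\to\widehat{(G,\mathcal{S})}$ is surjective.
   Context: Completions are right uniform completions (minimal Cauchy filters). $\widehat{\mathrm{Id}}$ and $\widehat{\mathrm{Id}_B}$ are the unique continuous extensions of the identity maps. Hypotheses of Theorem 1.2 for a topology on $B$: $(B,\mathcal T)$ is a topological group, its completion is a group, the neighbourhoods of $1$ in $B$ form a basis at $1$ of a group topology on each minimal parabolic $P_s=\langle B,\dot s\rangle$, and $|P_s:B|<\infty$. *)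

From Stdlib Require Import List.

Set Implicit Arguments.

Record Grp := {
  carrier :> Type;
  mul : carrier -> carrier -> carrier;
  inv : carrier -> carrier;
  one : carrier;
  mulA : forall x y z, mul x (mul y z) = mul (mul x y) z;
  mul1g : forall x, mul one x = x;
  mulVg : forall x, mul (inv x) x = one
}.
Arguments mul {g}.
Arguments inv {g}.
Arguments one {g}.

Section Defs.
Context {G : Grp}.

Definition subset (A A' : G -> Prop) : Prop := forall x, A x -> A' x.

Definition is_subgroup (H : G -> Prop) : Prop :=
  H one /\ (forall x y, H x -> H y -> H (mul x y)) /\ (forall x, H x -> H (inv x)).

Definition generated (A : G -> Prop) : G -> Prop :=
  fun x => forall K, is_subgroup K -> subset A K -> K x.

Definition is_topology_on (H : G -> Prop) (tau : (G -> Prop) -> Prop) : Prop :=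
  (forall O, tau O -> subset O H) /\
  tau H /\
  (forall Fam : (G -> Prop) -> Prop, (forall O, Fam O -> tau O) ->
      tau (fun x => exists O, Fam O /\ O x)) /\
  (forall O O', tau O -> tau O' -> tau (fun x => O x /\ O' x)).

Definition nbhd (tau : (G -> Prop) -> Prop) (x : G) (V : G -> Prop) : Prop :=
  exists O, tau O /\ O x /\ subset O V.

Definition is_top_group (H : G -> Prop) (tau : (G -> Prop) -> Prop) : Prop :=
  is_subgroup H /\ is_topology_on H tau /\
  (forall O, tau O -> forall x y, H x -> H y -> O (mul x y) ->
     exists U V, tau U /\ tau V /\ U x /\ V y /\
       forall u v, U u -> V v -> O (mul u v)) /\
  (forall O, tau O -> forall x, H x -> O (inv x) ->
     exists U, tau U /\ U x /\ forall u, U u -> O (inv u)).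

Definition hausdorff (H : G -> Prop) (tau : (G -> Prop) -> Prop) : Prop :=
  forall x y, H x -> H y -> x <> y ->
    exists U V, tau U /\ tau V /\ U x /\ V y /\ forall z, U z -> V z -> False.

Definition subspace (tau : (G -> Prop) -> Prop) (K : G -> Prop) : (G -> Prop) -> Prop :=
  fun O => exists O', tau O' /\ forall x, O x <-> (O' x /\ K x).

Definition is_filter (F : (G -> Prop) -> Prop) : Prop :=
  F (fun _ => True) /\ ~ F (fun _ => False) /\
  (forall M M', F M -> subset M M' -> F M') /\
  (forall M M', F M -> F M' -> F (fun x => M x /\ M' x)).

(* A Cauchy filter on the space (H, tau) (represented as a filter on G
   containing H) for the right uniformity, whose entourages are
   {(x,y) | x y^-1 in V}, V a neighbourhood of 1. *)
Definition cauchy (H : G -> Prop) (tau : (G -> Prop) -> Prop)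
  (F : (G -> Prop) -> Prop) : Prop :=
  is_filter F /\ F H /\
  forall V, nbhd tau one V ->
    exists M, F M /\ forall x y, M x -> M y -> V (mul x (inv y)).

(* minimal Cauchy filters = points of the completion \hat{(H,tau)} *)
Definition min_cauchy (H : G -> Prop) (tau : (G -> Prop) -> Prop)
  (F : (G -> Prop) -> Prop) : Prop :=
  cauchy H tau F /\
  forall F', cauchy H tau F' -> (forall M, F' M -> F M) -> (forall M, F M -> F' M).

(* The completion of (H,tau) is a group (criterion: inversion maps Cauchy
   filters to Cauchy filters, i.e. left and right uniformities have the
   same Cauchy filters). *)
Definition completion_is_group (H : G -> Prop) (tau : (G -> Prop) -> Prop) : Prop :=
  forall F, cauchy H tau F ->
    cauchy H tau (fun M => F (fun x => M (inv x))).

(* For tau_big finer than tau_small, the continuous extension of the identity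
   \hat{(H,tau_big)} -> \hat{(H,tau_small)} sends a minimal tau_big-Cauchy
   filter F to the unique minimal tau_small-Cauchy filter F' coarser than F.
   hatId_rel F F' expresses "hat Id (F) = F'". *)
Definition hatId_rel (H : G -> Prop) (tau_big tau_small : (G -> Prop) -> Prop)
  (F F' : (G -> Prop) -> Prop) : Prop :=
  min_cauchy H tau_big F /\ min_cauchy H tau_small F' /\ (forall M, F' M -> F M).

Definition hatId_surjective (H : G -> Prop) (tau_big tau_small : (G -> Prop) -> Prop)
  : Prop :=
  forall F', min_cauchy H tau_small F' -> exists F, hatId_rel H tau_big tau_small F F'.

(* BN-pairs.  Sdot is a finite list of representatives in N of the
   distinguished generators S of W = N/T, T = B cap N.                  *)
Definition Tgrp (B N : G -> Prop) : G -> Prop := fun x => B x /\ N x.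

Definition double_coset (B : G -> Prop) (w : G) : G -> Prop :=
  fun x => exists b b', B b /\ B b' /\ x = mul b (mul w b').

Definition is_BN_pair (B N : G -> Prop) (Sdot : list G) : Prop :=
  is_subgroup B /\ is_subgroup N /\
  (forall x : G, generated (fun y => B y \/ N y) x) /\
  (forall n t, N n -> Tgrp B N t -> Tgrp B N (mul (inv n) (mul t n))) /\
  (forall n, N n -> generated (fun y => Tgrp B N y \/ In y Sdot) n) /\
  (forall s, In s Sdot -> N s /\ ~ Tgrp B N s /\ Tgrp B N (mul s s)) /\
  (forall s n b, In s Sdot -> N n -> B b ->
     double_coset B n (mul s (mul b n)) \/
     double_coset B (mul s n) (mul s (mul b n))) /\
  (forall s, In s Sdot ->
     ~ (forall x, (exists b, B b /\ x = mul s (mul b s)) <-> B x)).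

Definition parabolic (B : G -> Prop) (s : G) : G -> Prop :=
  generated (fun y => B y \/ y = s).

Definition finite_index (P B : G -> Prop) : Prop :=
  exists l : list G, (forall g, In g l -> P g) /\
    forall x, P x -> exists g b, In g l /\ B b /\ x = mul g b.

Definition thm11_hyps (B : G -> Prop) (Sdot : list G)
  (sigma : (G -> Prop) -> Prop) : Prop :=
  hausdorff (fun _ => True) sigma /\
  completion_is_group (fun _ => True) sigma /\
  (forall s, In s Sdot -> finite_index (parabolic B s) B) /\
  sigma B.

Definition thm12_hyps_B (B : G -> Prop) (Sdot : list G)
  (rho : (G -> Prop) -> Prop) : Prop :=
  is_top_group B rho /\
  completion_is_group B rho /\
  (forall s, In s Sdot ->
     exists tau_s, is_top_group (parabolic B s) tau_s /\
       forall V, nbhd tau_s one V <-> exists U, nbhd rho one U /\ subset U V) /\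
  (forall s, In s Sdot -> finite_index (parabolic B s) B).

(* (G, sigma) satisfies the hypotheses of Theorem 1.2: the induced topology
   on B satisfies them and sigma is the topology on G determined by them,
   i.e. the sigma_B-neighbourhoods of 1 form a basis at 1 of sigma. *)
Definition thm12_hyps (B : G -> Prop) (Sdot : list G)
  (sigma : (G -> Prop) -> Prop) : Prop :=
  thm12_hyps_B B Sdot (subspace sigma B) /\
  forall V, nbhd sigma one V <-> exists U, nbhd (subspace sigma B) one U /\ subset U V.

End Defs.

(** Both hypotheses make [B] an open subgroup of [(G, sigma)], hence of the
    finer [(G, tau)].  A Cauchy filter for the right uniformity eventually
    lies in a single right coset [B y]; translating it by [y^-1], which
    preserves Cauchy filters and their minimality, turns a point of the
    completion of [(G, sigma)] into one of the completion of [(B, sigma_B)].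
    A preimage under [hat(Id_B)], translated back by [y], is a preimage under
    [hat(Id)]. *)

From Stdlib Require Import List Classical FunctionalExtensionality.

Section Completion.
Context {G : Grp}.

Lemma mulgV (x : G) : mul x (inv x) = one.
Proof.
  rewrite <- (mul1g G (mul x (inv x))), <- (mulVg G (inv x)) at 1.
  rewrite <- mulA, (mulA G (inv x) x (inv x)), mulVg, mul1g.
  apply mulVg.
Qed.

Lemma mulg1 (x : G) : mul x one = x.
Proof. rewrite <- (mulVg G x), mulA, mulgV, mul1g. reflexivity. Qed.

Lemma mulgK (g x : G) : mul (mul x g) (inv g) = x.
Proof. rewrite <- mulA, mulgV, mulg1. reflexivity. Qed.

Lemma mulgVK (g x : G) : mul (mul x (inv g)) g = x.
Proof. rewrite <- mulA, mulVg, mulg1. reflexivity. Qed.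

Lemma inv_unique (a b : G) : mul a b = one -> inv b = a.
Proof. intros ab. rewrite <- (mulgK b a), ab, mul1g. reflexivity. Qed.

Lemma invMg (x y : G) : inv (mul x y) = mul (inv y) (inv x).
Proof.
  apply inv_unique.
  rewrite mulA, <- (mulA G (inv y) (inv x) x), mulVg, mulg1. apply mulVg.
Qed.

Lemma divg_mul2r (g x y : G) : mul (mul x g) (inv (mul y g)) = mul x (inv y).
Proof. rewrite invMg, mulA, mulgK. reflexivity. Qed.

Lemma filter_nonempty {F : (G -> Prop) -> Prop} {M : G -> Prop} :
  is_filter F -> F M -> exists x, M x.
Proof.
  intros [_ [F_proper [F_up _]]] FM.
  apply NNPP. intros no_x. apply F_proper.
  apply (F_up M); [exact FM|]. intros x Mx. apply no_x. exists x. exact Mx.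
Qed.

Definition rtranslate (g : G) (F : (G -> Prop) -> Prop) : (G -> Prop) -> Prop :=
  fun A => F (fun x => A (mul x g)).

Lemma rtranslate_le (g : G) {F1 F2 : (G -> Prop) -> Prop} :
  (forall M, F1 M -> F2 M) -> forall M, rtranslate g F1 M -> rtranslate g F2 M.
Proof. intros le M. apply le. Qed.

Lemma rtranslateK (g : G) (F : (G -> Prop) -> Prop) :
  rtranslate (inv g) (rtranslate g F) = F.
Proof.
  apply functional_extensionality. intros A. unfold rtranslate.
  f_equal. apply functional_extensionality. intros x. rewrite mulgK. reflexivity.
Qed.

Lemma rtranslateVK (g : G) (F : (G -> Prop) -> Prop) :
  rtranslate g (rtranslate (inv g) F) = F.
Proof.
  apply functional_extensionality. intros A. unfold rtranslate.
  f_equal. apply functional_extensionality. intros x. rewrite mulgVK. reflexivity.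
Qed.

Lemma filter_rtranslate (g : G) (F : (G -> Prop) -> Prop) :
  is_filter F -> is_filter (rtranslate g F).
Proof.
  intros [F_true [F_proper [F_up F_meet]]].
  split; [exact F_true|]. split; [exact F_proper|]. split.
  - intros M M' FM sub. apply (F_up _ _ FM). intros x. apply sub.
  - intros M M'. apply F_meet.
Qed.

Section WholeGroup.
Context {tau : (G -> Prop) -> Prop}.

Lemma cauchy_rtranslate (g : G) {F : (G -> Prop) -> Prop} :
  cauchy (fun _ => True) tau F -> cauchy (fun _ => True) tau (rtranslate g F).
Proof.
  intros [F_filter [F_true F_small]].
  split; [apply filter_rtranslate; exact F_filter|]. split; [exact F_true|].
  intros V V_nbhd. destruct (F_small V V_nbhd) as [M [FM M_small]].
  exists (fun x => M (mul x (inv g))). split.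
  - unfold rtranslate.
    replace (fun x => M (mul (mul x g) (inv g))) with M; [exact FM|].
    apply functional_extensionality. intros x. rewrite mulgK. reflexivity.
  - intros x y Mx My. rewrite <- (divg_mul2r (inv g)). apply M_small; assumption.
Qed.

Lemma min_cauchy_rtranslate (g : G) {F : (G -> Prop) -> Prop} :
  min_cauchy (fun _ => True) tau F -> min_cauchy (fun _ => True) tau (rtranslate g F).
Proof.
  intros [F_cauchy F_min].
  split; [apply cauchy_rtranslate; exact F_cauchy|].
  intros F' F'_cauchy le.
  assert (back : forall M, F M -> rtranslate (inv g) F' M).
  { apply F_min; [apply cauchy_rtranslate; exact F'_cauchy|].
    rewrite <- (rtranslateK g F). apply rtranslate_le. exact le. }
  rewrite <- (rtranslateVK g F'). apply rtranslate_le. exact back.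
Qed.

Context {B : G -> Prop} (B_subgroup : is_subgroup B) (B_nbhd : nbhd tau one B).

(** Members [M] with [M M^-1] inside [B] lie in a right coset of [B]. *)
Lemma cauchy_mem_rcoset {F : (G -> Prop) -> Prop} :
  cauchy (fun _ => True) tau F -> exists y, F (fun x => B (mul x (inv y))).
Proof.
  intros [F_filter [_ F_small]].
  destruct (F_small B B_nbhd) as [M [FM M_small]].
  destruct (filter_nonempty F_filter FM) as [y My].
  exists y. apply (proj1 (proj2 (proj2 F_filter)) M); [exact FM|].
  intros x Mx. apply M_small; assumption.
Qed.

Lemma cauchy_mem_subgroup {F : (G -> Prop) -> Prop} :
  cauchy (fun _ => True) tau F ->
  (forall M, F M -> exists x, M x /\ B x) -> F B.
Proof.
  intros F_cauchy meets. destruct (cauchy_mem_rcoset F_cauchy) as [y Fy].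
  destruct (meets _ Fy) as [x [x_coset Bx]].
  destruct B_subgroup as [_ [B_mul B_inv]].
  apply (proj1 (proj2 (proj2 (proj1 F_cauchy))) _ _ Fy). intros z z_coset.
  rewrite <- (mulgVK x z), <- (divg_mul2r (inv y) z x).
  apply B_mul; [apply B_mul; [exact z_coset|apply B_inv; exact x_coset]|exact Bx].
Qed.

End WholeGroup.

Lemma nbhd_finer {sigma tau : (G -> Prop) -> Prop} {x : G} {V : G -> Prop} :
  (forall O, sigma O -> tau O) -> nbhd sigma x V -> nbhd tau x V.
Proof.
  intros finer [O [sigma_O OV]]. exists O. split; [apply finer; exact sigma_O|exact OV].
Qed.

Lemma nbhd_subspace {sigma : (G -> Prop) -> Prop} {B V : G -> Prop} :
  nbhd (subspace sigma B) one V ->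
  exists W, nbhd sigma one W /\ forall x, W x -> B x -> V x.
Proof.
  intros [O [[O' [sigma_O' O_def]] [O1 OV]]]. exists O'. split.
  - exists O'. split; [exact sigma_O'|]. split; [apply O_def; exact O1|]. intros x Ox. exact Ox.
  - intros x O'x Bx. apply OV. apply O_def. split; assumption.
Qed.

Section Subspace.
Context {sigma : (G -> Prop) -> Prop} {B : G -> Prop} (B_subgroup : is_subgroup B).

Lemma cauchy_subspace_iff {F : (G -> Prop) -> Prop} :
  F B -> cauchy B (subspace sigma B) F <-> cauchy (fun _ => True) sigma F.
Proof.
  intros FB. destruct B_subgroup as [_ [B_mul B_inv]]. split.
  - intros [F_filter [_ F_small]]. split; [exact F_filter|]. split; [exact (proj1 F_filter)|].
    intros V [O [sigma_O [O1 OV]]].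
    destruct (F_small (fun x => V x /\ B x)) as [M [FM M_small]].
    + exists (fun x => O x /\ B x). split; [exists O; split; [exact sigma_O|tauto]|].
      split; [split; [exact O1|exact (proj1 B_subgroup)]|].
      intros x [Ox Bx]. split; [apply OV; exact Ox|exact Bx].
    + exists M. split; [exact FM|]. intros x y Mx My. apply (M_small x y Mx My).
  - intros [F_filter [_ F_small]]. split; [exact F_filter|]. split; [exact FB|].
    intros V V_nbhd. destruct (nbhd_subspace V_nbhd) as [W [W_nbhd WV]].
    destruct (F_small W W_nbhd) as [M [FM M_small]].
    exists (fun x => M x /\ B x). split; [apply (proj2 (proj2 (proj2 F_filter))); assumption|].
    intros x y [Mx Bx] [My By]. apply WV; [apply M_small; assumption|].
    apply B_mul; [exact Bx|apply B_inv; exact By].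
Qed.

Lemma min_cauchy_subspace_iff {F : (G -> Prop) -> Prop} :
  nbhd sigma one B -> F B ->
  min_cauchy B (subspace sigma B) F <-> min_cauchy (fun _ => True) sigma F.
Proof.
  intros B_nbhd FB. split.
  - intros [F_cauchy F_min]. split; [apply cauchy_subspace_iff; assumption|].
    intros F' F'_cauchy le.
    assert (F'B : F' B).
    { apply (cauchy_mem_subgroup B_subgroup B_nbhd F'_cauchy).
      intros M F'M. destruct F_cauchy as [F_filter _].
      apply (filter_nonempty F_filter).
      apply (proj2 (proj2 (proj2 F_filter))); [apply le; exact F'M|exact FB]. }
    apply F_min; [apply cauchy_subspace_iff; assumption|exact le].
  - intros [F_cauchy F_min]. split; [apply cauchy_subspace_iff; assumption|].
    intros F' F'_cauchy le. apply F_min; [|exact le].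
    apply (cauchy_subspace_iff (proj1 (proj2 F'_cauchy))). exact F'_cauchy.
Qed.

End Subspace.

Lemma nbhd_one_of_hyps {B : G -> Prop} {Sdot : list G} {sigma : (G -> Prop) -> Prop} :
  is_subgroup B -> thm11_hyps B Sdot sigma \/ thm12_hyps B Sdot sigma ->
  nbhd sigma one B.
Proof.
  intros [B1 _] [[_ [_ [_ B_open]]] | [[[_ [[_ [B_open _]] _]] _] basis]].
  - exists B. split; [exact B_open|]. split; [exact B1|]. intros x Bx. exact Bx.
  - apply basis. exists B. split; [|intros x Bx; exact Bx].
    exists B. split; [exact B_open|]. split; [exact B1|]. intros x Bx. exact Bx.
Qed.

End Completion.

Theorem corollary1p4 (G : Grp) (B N : G -> Prop) (Sdot : list G)
  (sigma tau : (G -> Prop) -> Prop) :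
  is_BN_pair B N Sdot ->
  is_top_group (fun _ : G => True) sigma ->
  is_top_group (fun _ : G => True) tau ->
  (forall O, sigma O -> tau O) ->
  (thm11_hyps B Sdot sigma \/ thm12_hyps B Sdot sigma) ->
  hatId_surjective B (subspace tau B) (subspace sigma B) ->
  hatId_surjective (fun _ : G => True) tau sigma.
Proof.
  intros [B_subgroup _] _ _ finer hyps surj_B F F_min.
  assert (B_sigma : nbhd sigma one B) by exact (nbhd_one_of_hyps B_subgroup hyps).
  assert (B_tau : nbhd tau one B) by exact (nbhd_finer finer B_sigma).
  destruct (cauchy_mem_rcoset B_sigma (proj1 F_min)) as [y F_coset].
  set (FB := rtranslate (inv y) F).
  assert (FB_min : min_cauchy B (subspace sigma B) FB).
  { apply min_cauchy_subspace_iff; [exact B_subgroup|exact B_sigma|exact F_coset|].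
    apply min_cauchy_rtranslate. exact F_min. }
  destruct (surj_B FB FB_min) as [FB' [FB'_min [_ FB_le]]].
  exists (rtranslate y FB'). split; [|split; [exact F_min|]].
  - apply min_cauchy_rtranslate.
    apply (min_cauchy_subspace_iff B_subgroup B_tau (proj1 (proj2 (proj1 FB'_min)))).
    exact FB'_min.
  - rewrite <- (rtranslateVK y F). apply rtranslate_le. exact FB_le.
Qed.
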